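(* For each integer $n\ge 1$ let $\mathbb{P}_n^{*}$ be a probability distribution on $[n]=\{1,\ldots,n\}$, written as $\mathbb{P}_n^{*}(i)=\frac{1}{n}+\varepsilon_{i,n}$ for $i\in[n]$ (so $\varepsilon_{i,n}\in[-\tfrac1n,1-\tfrac1n]$ and $\sum_{i=1}^n\varepsilon_{i,n}=0$). Write $\alpha_n=n^{1/\log\log n}$. Assume there is a constant $C$ such that for all $n$ (with $\log\log n>0$) and all primes $p>\alpha_n$, $$\sum_{l=1}^{\lfloor n/p\rfloor}\varepsilon_{lp,n}\le \frac{C}{p}.$$ Then, as $n\to\infty$, $$\frac{1}{(\log\log n)^{1/2}}\sum_{\alpha_n<p\le n}\left(\frac1p+\sum_{l=1}^{\lfloor n/p\rfloor}\varepsilon_{lp,n}\right)\to 0,$$ where the outer sum is over primes $p$ with $\alpha_n<p\le n$.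
   Context: $\lfloor\cdot\rfloor$ is the floor function; $\log$ is the natural logarithm. *)

From HB Require Import structures.
From mathcomp Require Import all_boot all_order all_algebra.
From mathcomp Require Import all_classical all_reals all_analysis.
Set Implicit Arguments. Unset Strict Implicit. Unset Printing Implicit Defensive.
Import Order.TTheory GRing.Theory Num.Theory.
Local Open Scope ring_scope.

Definition alpha (R : realType) (n : nat) : R :=
  powR (n%:R) ((ln (ln (n%:R : R)))^-1).

(* eps i n = epsilon_{i,n}; P_n^*(i) = 1/n + eps i n is a probability
   distribution on {1,...,n}. *)
Definition is_prob_perturbation (R : realType) (eps : nat -> nat -> R) : Prop :=
  forall n : nat, (1 <= n)%N ->
    (forall i : nat, (1 <= i <= n)%N -> 0 <= (n%:R)^-1 + eps i n) /\
    \sum_(1 <= i < n.+1) eps i n = 0.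

Definition mult_sum (R : realType) (eps : nat -> nat -> R) (n p : nat) : R :=
  \sum_(1 <= l < (n %/ p).+1) eps (l * p)%N n.

Definition lemma3_seq (R : realType) (eps : nat -> nat -> R) (n : nat) : R :=
  (Num.sqrt (ln (ln (n%:R : R))))^-1 *
  \sum_(0 <= p < n.+1 | prime p && (alpha R n < p%:R))
     ((p%:R)^-1 + mult_sum eps n p).

From HB Require Import structures.
From mathcomp Require Import all_boot all_order all_algebra.
From mathcomp Require Import all_classical all_reals all_analysis.
From mathcomp Require Import ring lra.
Set Implicit Arguments. Unset Strict Implicit. Unset Printing Implicit Defensive.
Import Order.TTheory GRing.Theory Num.Theory.
Import numFieldNormedType.Exports.
Local Open Scope classical_set_scope.

(* Since P_n^* is a probability, each summand 1/p + sum_l eps_{lp,n} is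
   nonnegative (the l-sum is at least -floor(n/p)/n >= -1/p), and by hypothesis
   it is at most (1 + |C|)/p.  The primes in (m, 2m] all divide C(2m, m) <= 4^m,
   so there are at most 2m / log_2 m of them; hence the primes of the dyadic
   block (2^j, 2^(j+1)] contribute at most 2/j to sum 1/p.  Summing over
   log_2 alpha_n <= j <= log_2 n bounds sum_{alpha_n < p <= n} 1/p by
   O(log (log n / log alpha_n)) = O(log log log n) = o((log log n)^(1/2)). *)

Lemma prime_dvd_fact p m : prime p -> (p %| m`!) = (p <= m).
Proof.
move=> p_pr; apply/idP/idP => [|le_pm]; last by rewrite dvdn_fact // prime_gt0.
elim: m => [|m IHm]; first by rewrite dvdn1 => /eqP p1; rewrite p1 in p_pr.
rewrite factS Euclid_dvdM // => /orP[/dvdn_leq -> // | /IHm]; exact: leqW.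
Qed.

Definition prime_count (m k : nat) : nat := \sum_(m.+1 <= p < k.+1 | prime p) 1.

Lemma prod_primes_dvd_bin m :
  \prod_(m.+1 <= p < (2 * m).+1 | prime p) p %| 'C(2 * m, m).
Proof.
set P := \prod_(_ <= p < _ | _) p.
have coP : coprime P m`!.
  rewrite /P big_nat_cond; elim/big_ind: _ => [|x y cx cy|p /andP[/andP[lt_mp _] p_pr]].
  - exact: coprime1n.
  - by rewrite coprimeMl cx.
  - by rewrite prime_coprime // prime_dvd_fact // -ltnNge.
have le_m2m : m <= 2 * m by rewrite leq_pmull.
have : 'C(2 * m, m) * m`! = \prod_(m.+1 <= k < (2 * m).+1) k.
  apply/eqP; rewrite -(eqn_pmul2l (fact_gt0 m)) -fact_split // mulnC -mulnA.
  by rewrite -{4}(_ : 2 * m - m = m) ?bin_fact // mul2n -addnn addnK.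
rewrite -(Gauss_dvdl _ coP) => ->.
by rewrite (bigID prime) /= dvdn_mulr.
Qed.

Lemma central_bin_le m : 'C(2 * m, m) <= 4 ^ m.
Proof.
have -> : 4 ^ m = (1 + 1) ^ (2 * m) by rewrite expnM.
rewrite Pascal.
have lt_m2m : m < (2 * m).+1 by rewrite ltnS leq_pmull.
by rewrite (bigD1 (Ordinal lt_m2m)) //= !exp1n !muln1 leq_addr.
Qed.

Lemma pow_prime_count_le_prod m k :
  m ^ prime_count m k <= \prod_(m.+1 <= p < k.+1 | prime p) p.
Proof.
rewrite /prime_count big_nat_cond [X in _ <= X]big_nat_cond.
elim/big_rec2: _ => // p a b /andP[/andP[lt_mp _] _] le_ab.
by rewrite expnD expn1 leq_mul // ltnW.
Qed.

Lemma chebyshev_prime_count m : m ^ prime_count m (2 * m) <= 4 ^ m.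
Proof.
apply: leq_trans (pow_prime_count_le_prod m _) _.
apply: leq_trans (central_bin_le m); apply: dvdn_leq (prod_primes_dvd_bin m).
by rewrite bin_gt0 leq_pmull.
Qed.

Lemma prime_count_dyadic j : prime_count (2 ^ j) (2 ^ j.+1) * j <= 2 ^ j.+1.
Proof.
have := chebyshev_prime_count (2 ^ j).
by rewrite -expnM -[4]/(2 ^ 2) -!expnM leq_exp2l // expnS mulnC.
Qed.

Local Open Scope ring_scope.

Lemma ler_sum_nneg_subset (R : numDomainType) I (s : seq I) (P Q : pred I)
    (f : I -> R) :
  (forall i, Q i -> P i) -> (forall i, P i -> 0 <= f i) ->
  \sum_(i <- s | Q i) f i <= \sum_(i <- s | P i) f i.
Proof.
move=> QP f_ge0; rewrite big_mkcond [leRHS]big_mkcond ler_sum // => i _.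
case: ifP => [/QP -> // | _]; by case: ifP => // /f_ge0.
Qed.

Section Estimates.
Variable R : realType.

Lemma sum_inv_primes_dyadic_le j : (0 < j)%N ->
  \sum_((2 ^ j).+1 <= p < (2 ^ j.+1).+1 | prime p) (p%:R : R)^-1 <= 2 / j%:R.
Proof.
move=> j_gt0; have pow_gt0 : (0 : R) < (2 ^ j)%:R by rewrite ltr0n expn_gt0.
apply: (@le_trans _ _ ((prime_count (2 ^ j) (2 ^ j.+1))%:R / (2 ^ j)%:R)).
  rewrite /prime_count natr_sum mulr_suml big_nat_cond [leRHS]big_nat_cond.
  apply: ler_sum => p /andP[/andP[lt_p _] _].
  have p_gt0 : (0 < p)%N := leq_ltn_trans (leq0n _) lt_p.
  by rewrite mul1r lef_pV2 ?posrE ?ltr0n ?expn_gt0 ?ler_nat // ltnW.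
rewrite ler_pdivrMr // mulrAC ler_pdivlMr ?ltr0n // -natrM -[2 * _]natrM.
by rewrite ler_nat -expnS prime_count_dyadic.
Qed.

Lemma inv_le_ln_sub j : (1 < j)%N -> (j%:R : R)^-1 <= ln j%:R - ln j.-1%:R.
Proof.
move=> j_gt1; have j_gt0 : (0 < j)%N by apply: ltnW.
have jR_gt0 : (0 : R) < j%:R by rewrite ltr0n.
have inv_lt1 : (j%:R : R)^-1 < 1 by rewrite invf_lt1 // ltr1n.
have -> : (j.-1%:R : R) = j%:R * (1 - j%:R^-1).
  by rewrite mulrBr mulr1 mulfV ?gt_eqF // -[in RHS](prednK j_gt0) -natr1 addrK.
rewrite lnM ?posrE ?subr_gt0 // opprD addNKr lerNr.
by apply: le_ln1Dx; rewrite ltrN2.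
Qed.

Lemma sum_inv_primes_pow2_le a b : (1 < a <= b)%N ->
  \sum_((2 ^ a).+1 <= p < (2 ^ b).+1 | prime p) (p%:R : R)^-1
    <= 2 * (ln b.-1%:R - ln a.-1%:R).
Proof.
case/andP=> a_gt1; elim: b => [|b IHb].
  by rewrite leqn0 => /eqP a0; rewrite a0 in a_gt1.
rewrite leq_eqVlt => /predU1P[->|]; first by rewrite big_geq ?subrr ?mulr0.
rewrite ltnS => le_ab; have b_gt1 : (1 < b)%N by apply: leq_trans le_ab.
rewrite (@big_cat_nat _ _ _ (2 ^ b).+1) ?ltnS ?leq_exp2l //=.
have := sum_inv_primes_dyadic_le (ltnW b_gt1); have := inv_le_ln_sub b_gt1.
have := IHb le_ab; lra.
Qed.

Lemma ln_pow2 k : ln ((2 ^ k)%:R : R) = k%:R * ln 2.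
Proof. by rewrite natrX lnXn // mulr_natl. Qed.

Lemma sum_inv_primes_gt_le (t : R) n : 16 <= t -> t <= n%:R ->
  \sum_(0 <= p < n.+1 | prime p && (t < p%:R)) (p%:R : R)^-1
    <= 2 * ln (2 * (ln n%:R / ln t)).
Proof.
move=> t_ge16 le_tn.
have ln2_gt0 : (0 : R) < ln 2 by rewrite ln_gt0 // ltr1n.
have t_gt0 : 0 < t by apply: lt_le_trans t_ge16.
have n_gt0 : (0 < n)%N by rewrite -(ltr0n R) (lt_le_trans t_gt0).
set u := ln t / ln 2; set v := ln (n%:R : R) / ln 2.
have u_ge4 : 4 <= u.
  by rewrite ler_pdivlMr // -ln_pow2 ler_ln ?posrE ?ltr0n.
have le_uv : u <= v by rewrite ler_pM2r ?invr_gt0 // ler_ln ?posrE ?ltr0n.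
have u_ge0 : 0 <= u by apply: le_trans u_ge4.
(* Cover (t, n] by the dyadic blocks (2^j, 2^j.+1] with a <= j < b. *)
set a := Num.truncn u; set b := (Num.truncn v).+1.
have a_gt1 : (1 < a)%N by rewrite truncn_gt_nat (le_trans _ u_ge4) // ler_nat.
have le_ab : (a <= b)%N by apply/leqW/le_truncn.
have pow2a_le_t : (2 ^ a)%:R <= t.
  rewrite -ler_ln ?posrE ?ltr0n ?expn_gt0 // ln_pow2 -ler_pdivlMr //.
  by rewrite truncn_le.
have n_le_pow2b : (n <= 2 ^ b)%N.
  rewrite -(ler_nat R) -ler_ln ?posrE ?ltr0n ?expn_gt0 //.
  by rewrite ln_pow2 -ler_pdivrMr // ltW // truncnS_gt.
apply: (@le_trans _ _ (\sum_((2 ^ a).+1 <= p < (2 ^ b).+1 | prime p) (p%:R : R)^-1)).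
  rewrite (@big_nat_widen _ _ _ 0 n.+1 (2 ^ b).+1) //.
  rewrite [leRHS](@big_nat_widenl _ _ _ (2 ^ a).+1 0) //.
  apply: ler_sum_nneg_subset => [p /andP[/andP[-> lt_tp] _] | p _].
    by rewrite -(ltr_nat R) (le_lt_trans pow2a_le_t).
  by rewrite invr_ge0.
apply: le_trans (@sum_inv_primes_pow2_le a b _) _; first by rewrite a_gt1 le_ab.
have lnt_gt0 : 0 < ln t by rewrite ln_gt0 // (lt_le_trans _ t_ge16) ?ltr1n.
have -> : 2 * (ln n%:R / ln t) = v / (u / 2).
  by rewrite /u /v; field; rewrite ?gt_eqF.
have u2_gt0 : 0 < u / 2 by rewrite divr_gt0 // (lt_le_trans _ u_ge4).
have a1_gt0 : (0 < a.-1)%N by rewrite -ltnS prednK // ltnW.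
have v_gt0 : 0 < v by apply: lt_le_trans le_uv; apply: lt_le_trans u_ge4.
rewrite ler_pM2l // ln_div ?posrE //.
apply: lerB; rewrite ler_ln ?posrE ?ltr0n //.
- by rewrite truncn_le ltW.
- by rewrite /= (leq_trans _ (le_truncn le_uv)) // ltnW.
- have : u < (a.-1 + 2)%:R by rewrite addn2 prednK ?(ltnW a_gt1) // truncnS_gt.
  rewrite natrD; lra.
Qed.

Lemma ln_gt0_gt1 (x : R) : 0 < ln x -> 1 < x.
Proof. by apply: contraTT; rewrite -!leNgt; apply: ln_le0. Qed.

Lemma lnln_cvgy : (fun n : nat => ln (ln (n%:R : R))) @ \oo --> +oo.
Proof.
apply/cvgryPge => A; apply: filterS (nbhs_infty_gtr (expR (expR A))) => n lt_n.
have n_gt0 : (0 : R) < n%:R by apply: lt_trans lt_n; apply: expR_gt0.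
have lt_lnn : expR A < ln (n%:R : R).
  by rewrite -[expR A]expRK ltr_ln ?posrE ?expR_gt0.
have lnn_gt0 : 0 < ln (n%:R : R) := lt_trans (expR_gt0 A) lt_lnn.
by rewrite -[A]expRK ler_ln ?posrE ?expR_gt0 // ltW.
Qed.

Lemma ln_div_sqrt_cvgy0 : ln x / Num.sqrt x @[x --> +oo] --> (0 : R).
Proof.
apply/cvgrPdist_le => e e_gt0; near=> x.
have x_ge1 : 1 <= x by near: x; apply: nbhs_pinfty_ge; rewrite num_real.
have x_large : (4 / e) ^+ 4 <= x by near: x; apply: nbhs_pinfty_ge; rewrite num_real.
set s := Num.sqrt (Num.sqrt x).
have s_gt0 : 0 < s by rewrite !sqrtr_gt0 (lt_le_trans ltr01).
have s2 : s ^+ 2 = Num.sqrt x by rewrite sqr_sqrtr // sqrtr_ge0.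
have s4 : s ^+ 4 = x by rewrite (exprM s 2 2) s2 sqr_sqrtr // (le_trans ler01).
have lnx : ln x = 4 * ln s by rewrite -s4 lnXn // mulr_natl.
rewrite sub0r normrN ger0_norm; last by rewrite divr_ge0 ?sqrtr_ge0 ?ln_ge0.
have s_large : 4 / e <= s.
  by rewrite -(@ler_pXn2r _ 4) ?nnegrE ?divr_ge0 ?(ltW e_gt0) ?(ltW s_gt0) // s4.
rewrite -s2 lnx ler_pdivrMr ?exprn_gt0 // expr2 mulrA.
apply: le_trans (_ : 4 * s <= _); first by rewrite ler_pM2l // ltW // ln_sublinear.
by rewrite ler_pM2r // mulrC -ler_pdivrMr.
Unshelve. all: end_near. Qed.

Lemma ln_alpha n : ln (alpha R n) = ln n%:R / ln (ln n%:R).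
Proof. by rewrite ln_powR mulrC. Qed.

Lemma alpha_ge16_le_n n : 8 <= ln (ln (n%:R : R)) -> 16 <= alpha R n <= n%:R.
Proof.
set x := ln (n%:R : R); set L := ln x => L_ge8.
have L_gt0 : 0 < L by apply: lt_le_trans L_ge8.
have x_gt1 : 1 < x by apply: ln_gt0_gt1.
have x_gt0 : 0 < x by apply: lt_trans x_gt1.
have n_gt0 : (0 : R) < n%:R by apply/(lt_trans ltr01)/ln_gt0_gt1.
have alpha_gt0 : 0 < alpha R n by apply: powR_gt0.
have x_ge4L : 4 * L <= x.
  have := @expR_ge1Dxn R L 1 (ltW L_gt0); rewrite lnK ?posrE //.
  apply: le_trans; rewrite expr2 -mulrA [_ / _]mulrC.
  rewrite (_ : 2`!%:R = 2 :> R) // ler_wpDl // [L * _]mulrC ler_pM2r //; lra.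
apply/andP; split; rewrite -ler_ln ?posrE // ln_alpha -/x -/L.
- have ln2_le1 : ln 2 <= 1 :> R by have := @le_ln1Dx R 1; apply.
  rewrite -[16]/((2 ^ 4)%:R) ln_pow2 ler_pdivlMr //.
  by apply: le_trans x_ge4L; rewrite ler_pM2r // ler_piMr.
- by rewrite ler_pdivrMr // ler_peMr ?(ltW x_gt0) // (le_trans _ L_ge8) // ler1n.
Qed.

Lemma sum_inv_primes_gt_alpha_le n : 8 <= ln (ln (n%:R : R)) ->
  \sum_(0 <= p < n.+1 | prime p && (alpha R n < p%:R)) (p%:R : R)^-1
    <= 4 * ln (ln (ln n%:R)).
Proof.
set x := ln (n%:R : R); set L := ln x => L_ge8.
have L_gt0 : 0 < L by apply: lt_le_trans L_ge8.
have x_gt0 : 0 < x by apply/(lt_trans ltr01)/ln_gt0_gt1.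
have /andP[alpha_ge16 alpha_le_n] := alpha_ge16_le_n L_ge8.
apply: le_trans (sum_inv_primes_gt_le alpha_ge16 alpha_le_n) _.
have -> : x / ln (alpha R n) = L.
  by rewrite ln_alpha -/x -/L; field; rewrite !gt_eqF.
have : ln 2 <= ln L by rewrite ler_ln ?posrE // (le_trans _ L_ge8) // ler_nat.
rewrite lnM ?posrE //; lra.
Qed.

Section Perturbation.
Variable eps : nat -> nat -> R.
Hypothesis eps_prob : is_prob_perturbation eps.

Lemma inv_add_mult_sum_ge0 n p : (0 < p <= n)%N ->
  0 <= (p%:R)^-1 + mult_sum eps n p.
Proof.
case/andP=> p_gt0 le_pn; have n_gt0 : (0 < n)%N := leq_trans p_gt0 le_pn.
have [eps_ge _] := eps_prob n_gt0.
have pR_gt0 : (0 : R) < p%:R by rewrite ltr0n.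
have nR_gt0 : (0 : R) < n%:R by rewrite ltr0n.
apply: (@le_trans _ _ ((p%:R)^-1 - (n %/ p)%:R / n%:R)).
  rewrite subr_ge0 ler_pdivrMr // ler_pdivlMl // -natrM ler_nat mulnC.
  exact: leq_trunc_div.
rewrite lerD2l /mult_sum.
apply: (@le_trans _ _ (\sum_(1 <= l < (n %/ p).+1) - (n%:R)^-1)).
  by rewrite sumr_const_nat subn1 /= -[X in _ <= X]mulr_natr mulNr mulrC.
rewrite !big_nat; apply: ler_sum => l /andP[l_gt0 lt_l].
rewrite lerNl -subr_ge0 opprK eps_ge // muln_gt0 l_gt0 p_gt0 /=.
by rewrite (leq_trans _ (leq_trunc_div n p)) // leq_mul2r -ltnS lt_l orbT.
Qed.

Lemma lemma3_seq_ge0 n : 0 <= lemma3_seq eps n.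
Proof.
rewrite mulr_ge0 ?invr_ge0 ?sqrtr_ge0 // big_nat_cond sumr_ge0 // => p.
case/andP=> /andP[_ lt_pn] /andP[p_pr _].
by rewrite inv_add_mult_sum_ge0 // prime_gt0.
Qed.

Lemma lemma3_seq_le (C : R) n :
    (forall p, prime p -> alpha R n < p%:R -> mult_sum eps n p <= C / p%:R) ->
    8 <= ln (ln (n%:R : R)) ->
  lemma3_seq eps n <= 4 * (1 + `|C|) * (ln (ln (ln n%:R)) / Num.sqrt (ln (ln n%:R))).
Proof.
move=> mult_sum_le L_ge8.
have L_gt0 : 0 < ln (ln (n%:R : R)) by apply: lt_le_trans L_ge8.
rewrite /lemma3_seq mulrC mulrA ler_pM2r ?invr_gt0 ?sqrtr_gt0 //.
apply: (@le_trans _ _ ((1 + `|C|) *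
  \sum_(0 <= p < n.+1 | prime p && (alpha R n < p%:R)) (p%:R)^-1)).
  rewrite mulr_sumr; apply: ler_sum => p /andP[p_pr lt_alpha_p].
  rewrite mulrDl mul1r lerD2l (le_trans (mult_sum_le p p_pr lt_alpha_p)) //.
  by rewrite ler_wpM2r ?invr_ge0 ?ler_norm.
by rewrite [4 * _]mulrC -mulrA ler_wpM2l ?addr_ge0 // sum_inv_primes_gt_alpha_le.
Qed.
End Perturbation.
End Estimates.

Theorem lemma3 (R : realType) (eps : nat -> nat -> R) :
  is_prob_perturbation eps ->
  (exists C : R, forall n : nat, 0 < ln (ln (n%:R : R)) ->
     forall p : nat, prime p -> alpha R n < p%:R ->
       mult_sum eps n p <= C / p%:R) ->
  lemma3_seq eps @ \oo --> (0 : R).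
Proof.
move=> eps_prob [C mult_sum_le].
pose L n := ln (ln (n%:R : R)).
apply: (@squeeze_cvgr _ _ _ _ (cst 0)
  (fun n => 4 * (1 + `|C|) * (ln (L n) / Num.sqrt (L n)))).
- move/cvgryPge: (@lnln_cvgy R) => /(_ 8); apply: filterS => n L_ge8.
  rewrite lemma3_seq_ge0 // lemma3_seq_le // => p.
  by apply: mult_sum_le; apply: lt_le_trans L_ge8.
- exact: cvg_cst.
- rewrite -(mulr0 (4 * (1 + `|C|))); apply: cvgMr.
  exact: cvg_comp (@lnln_cvgy R) (@ln_div_sqrt_cvgy0 R).
Qed.
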